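(* Let $\mathcal{P}$ be a set of mutually commuting Pauli operators on $n$ qubits generated by $r$ independent Pauli operators. The qubitwise diagonalization algorithm described in the context, with the logarithmic-depth version of Step 2 and with a null vector of symplectic weight at most $r^{(\alpha)}+1$ chosen at each stage $\alpha$, outputs a Clifford circuit that simultaneously diagonalizes all operators in $\mathcal{P}$, in which each stage has depth $O(\log r^{(\alpha)})$ and the whole circuit has depth $O(n\log r)$, assuming two-qubit gates that share a qubit cannot be executed in parallel while gates on disjoint qubits can.
   Context: A Pauli operator on $m$ qubits is encoded, up to phase, by $u=(\boldsymbol{x},\boldsymbol{z})\in\mathbb{F}_2^{2m}$ via $P=\bigotimes_{j=1}^m X^{x_j}Z^{z_j}$. For a set of Pauli operators, the tableau $(\mathcal{X}\mid\mathcal{Z})$ is the binary matrix whose rows encode the operators; the number of independent generators is its $\mathbb{F}_2$-rank. An operator is diagonal on qubit $j$ if its $j$-th tensor factor is $I$ or $Z$. The symplectic weight of $(\boldsymbol{v},\boldsymbol{w})\in\mathbb{F}_2^{2m}$ is $\omega(\boldsymbol{v},\boldsymbol{w})=|\{j: (v_j,w_j)\neq(0,0)\}|$. Qubitwise diagonalization algorithm. At stage $\alpha$: discard the qubits on which all operators are already diagonal; let $n^{(\alpha)}$ be the number of remaining qubits (stop if $n^{(\alpha)}=0$); let $T^{(\alpha)}$ be an independent generating set of the operators restricted to the remaining qubits, of size $r^{(\alpha)}$, with $r^{(\alpha)}\times 2n^{(\alpha)}$ tableau $M^{(\alpha)}$. Choose a nonzero $(\boldsymbol{v},\boldsymbol{w})$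 with $M^{(\alpha)}(\boldsymbol{v};\boldsymbol{w})=0$ over $\mathbb{F}_2$. Step 1: for each qubit $j$, if $v_j=0,w_j=1$ conjugate by a Hadamard $\mathrm{H}(j)$; if $v_j=w_j=1$ conjugate by the phase gate $\mathrm{S}(j)$ and then $\mathrm{H}(j)$. Step 2 (logarithmic-depth version): let $Q=(q_1,q_2,\dots)$ list the qubits $q$ with $(v_q,w_q)\neq(0,0)$; while $|Q|>1$, conjugate by $\mathrm{CNOT}(q_{2j},q_{2j-1})$ (control $q_{2j}$, target $q_{2j-1}$) for $j=1,\dots,\lfloor |Q|/2\rfloor$, then remove $q_{2},q_4,\dots,q_{2\lfloor|Q|/2\rfloor}$ from $Q$. Then proceed to stage $\alpha+1$. The output circuit is the composition of all gates used. *)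

From HB Require Import structures.
From mathcomp Require Import all_boot all_order all_algebra.
Set Implicit Arguments. Unset Strict Implicit. Unset Printing Implicit Defensive.
Import GRing.Theory.
Local Open Scope ring_scope.

(* A Pauli operator on n qubits, up to phase: the row (x | z) in F_2^{2n}. *)
Definition pauli (n : nat) := 'rV['F_2]_(n + n).

Definition xpart n (p : pauli n) (j : 'I_n) : 'F_2 := p 0 (lshift n j).
Definition zpart n (p : pauli n) (j : 'I_n) : 'F_2 := p 0 (rshift n j).

Definition qubit_of n (k : 'I_(n + n)) : 'I_n :=
  match split k with inl j => j | inr j => j end.

Definition mkpauli n (fx fz : 'I_n -> 'F_2) : pauli n :=
  \row_k match split k with inl j => fx j | inr j => fz j end.

(* symplectic form; two Pauli operators commute iff it vanishes *)
Definition symp n (p q : pauli n) : 'F_2 :=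
  \sum_(j < n) (xpart p j * zpart q j + zpart p j * xpart q j).

Definition commuting n (P : seq (pauli n)) : Prop :=
  forall p q, p \in P -> q \in P -> symp p q = 0.

Definition tableau n (ops : seq (pauli n)) : 'M['F_2]_(size ops, n + n) :=
  \matrix_(i < size ops) nth 0 ops i.

Definition ngen n (ops : seq (pauli n)) : nat := \rank (tableau ops).

(* an operator is diagonal on qubit j iff its factor is I or Z *)
Definition diag_on n (p : pauli n) (j : 'I_n) : bool := xpart p j == 0.

Definition all_diag n (ops : seq (pauli n)) : bool :=
  all (fun p => [forall j, diag_on p j]) ops.

Definition remaining n (ops : seq (pauli n)) : {set 'I_n} :=
  [set j | ~~ all (fun p => diag_on p j) ops].

Definition restr n (R : {set 'I_n}) (p : pauli n) : pauli n :=
  \row_k (if qubit_of k \in R then p 0 k else 0).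

Definition restr_tableau n (ops : seq (pauli n)) :=
  tableau (map (restr (remaining ops)) ops).

Definition vpart n (u : 'cV['F_2]_(n + n)) (j : 'I_n) : 'F_2 := u (lshift n j) 0.
Definition wpart n (u : 'cV['F_2]_(n + n)) (j : 'I_n) : 'F_2 := u (rshift n j) 0.

Definition supp n (u : 'cV['F_2]_(n + n)) : {set 'I_n} :=
  [set j | (vpart u j != 0) || (wpart u j != 0)].

Definition sweight n (u : 'cV['F_2]_(n + n)) : nat := #|supp u|.

Inductive gate (n : nat) :=
| GH of 'I_n
| GS of 'I_n
| GCNOT of 'I_n & 'I_n.   (* GCNOT control target *)

Definition gate_qubits n (g : gate n) : seq 'I_n :=
  match g with GH j => [:: j] | GS j => [:: j] | GCNOT c t => [:: c; t] end.

(* conjugation action of a gate on a Pauli operator (up to phase) *)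
Definition apply_gate n (g : gate n) (p : pauli n) : pauli n :=
  let x := xpart p in let z := zpart p in
  match g with
  | GH j => mkpauli (fun i => if i == j then z i else x i)
                    (fun i => if i == j then x i else z i)
  | GS j => mkpauli x (fun i => if i == j then z i + x i else z i)
  | GCNOT c t => mkpauli (fun i => if i == t then x t + x c else x i)
                         (fun i => if i == c then z c + z t else z i)
  end.

Definition apply_circuit n (gs : seq (gate n)) (p : pauli n) : pauli n :=
  foldl (fun q g => apply_gate g q) p gs.

(* circuit depth: gates sharing a qubit are sequential, gates on disjoint
   qubits may run in parallel (ASAP layering of the gate sequence). *)
Definition depth_step n (t : 'I_n -> nat) (g : gate n) : 'I_n -> nat :=
  let d := (\max_(q <- gate_qubits g) t q).+1 in
  fun q => if q \in gate_qubits g then d else t q.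

Definition depth n (gs : seq (gate n)) : nat :=
  let t := foldl (@depth_step n) (fun _ => 0%N) gs in \max_(q : 'I_n) t q.

Definition step1_gates n (u : 'cV['F_2]_(n + n)) (Q : seq 'I_n) : seq (gate n) :=
  flatten [seq (if (vpart u j == 0) && (wpart u j == 1) then [:: GH j]
                else if (vpart u j == 1) && (wpart u j == 1) then [:: GS j; GH j]
                else [::]) | j <- Q].

Fixpoint pair_round n (Q : seq 'I_n) : seq (gate n) * seq 'I_n :=
  match Q with
  | a :: b :: rest => let: (gs, keep) := pair_round rest in
                      (GCNOT b a :: gs, a :: keep)
  | _ => ([::], Q)
  end.

Fixpoint tree_gates_fuel n (fuel : nat) (Q : seq 'I_n) : seq (gate n) :=
  match fuel with
  | 0 => [::]
  | f.+1 => if (size Q <= 1)%N then [::]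
            else let: (gs, keep) := pair_round Q in gs ++ tree_gates_fuel f keep
  end.

Definition step2_gates n (Q : seq 'I_n) : seq (gate n) := tree_gates_fuel (size Q) Q.

(* choices made at a stage: generating set T (as its tableau M, of size r),
   null vector u = (v ; w), and the listing Q of its support *)
Record choice (n : nat) := MkChoice {
  ch_r : nat;
  ch_M : 'M['F_2]_(ch_r, n + n);
  ch_u : 'cV['F_2]_(n + n);
  ch_Q : seq 'I_n }.

Definition stage_gates n (ch : choice n) : seq (gate n) :=
  step1_gates (ch_u ch) (ch_Q ch) ++ step2_gates (ch_Q ch).

Definition valid_stage n (ops : seq (pauli n)) (ch : choice n) : Prop :=
  [/\ remaining ops != set0,
      row_free (ch_M ch),
      (ch_M ch == restr_tableau ops)%MS,
      ch_u ch != 0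
    & ch_M ch *m ch_u ch == 0] /\
  [/\ supp (ch_u ch) \subset remaining ops,
      (sweight (ch_u ch) <= ch_r ch + 1)%N,
      uniq (ch_Q ch)
    & ch_Q ch =i supp (ch_u ch)].

Definition apply_stage n (ops : seq (pauli n)) (ch : choice n) : seq (pauli n) :=
  map (apply_circuit (stage_gates ch)) ops.

Fixpoint valid_run n (ops : seq (pauli n)) (chs : seq (choice n)) : Prop :=
  match chs with
  | [::] => True
  | ch :: chs' => valid_stage ops ch /\ valid_run (apply_stage ops ch) chs'
  end.

Definition final_ops n (ops : seq (pauli n)) (chs : seq (choice n)) :=
  foldl (@apply_stage n) ops chs.

Definition output_circuit n (chs : seq (choice n)) : seq (gate n) :=
  flatten (map (@stage_gates n) chs).

(* Let u = (v ; w) be the null vector chosen at a stage.  Every current operator p,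
   with X- and Z-parts x and z, satisfies sum_j (v_j x_j + w_j z_j) = 0, since p is a
   combination of the rows of the tableau.  Step 1 replaces x_j by v_j x_j + w_j z_j on
   the support Q of u, and each CNOT round adds the x-part of every discarded qubit to
   that of a kept one, so at the end the first qubit of Q carries x-part 0.  All gates
   act inside Q, which consists of remaining qubits, so every stage removes a qubit
   from the remaining set and there are at most n stages.  The gates are linear on
   (x | z) and preserve the symplectic form, so the operators stay commuting and the
   number of generators never grows.
   A null vector of weight at most r + 1 exists (r the rank at the current stage):
   if more than r + 1 qubits remain, the 2(r + 1) coordinates of r + 1 of them exceed
   the rank; otherwise the symplectic dual of a non-diagonal operator, restricted to
   the remaining qubits, is a null vector by commutativity.  Step 1 has depth 2 and
   each CNOT round has depth 1 and halves Q, giving depth 2 + (log2 r + 1) per stage. *)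

From HB Require Import structures.
From mathcomp Require Import all_boot all_order all_algebra.
From mathcomp Require Import zify ring.
Import GRing.Theory.
Local Open Scope ring_scope.
Set Implicit Arguments. Unset Strict Implicit.

Lemma F2_cases (a : 'F_2) : a = 0 \/ a = 1.
Proof. by case: a => [[|[|k]] // lt_a]; [left | right]; apply: val_inj. Qed.

Lemma F2_addrr (a : 'F_2) : a + a = 0.
Proof. by rewrite addrr_pchar2 // pchar_Fp. Qed.

Lemma split_lshift m n (j : 'I_m) : split (lshift n j) = inl j.
Proof. exact: (unsplitK (inl _ j)). Qed.

Lemma split_rshift m n (j : 'I_n) : split (rshift m j) = inr j.
Proof. exact: (unsplitK (inr _ j)). Qed.

Section Gates.
Variable n : nat.
Implicit Types (p : pauli n) (g : gate n) (gs : seq (gate n)) (i j c t : 'I_n).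
Implicit Types (A B : {pred 'I_n}).

Lemma xpart_mkpauli fx fz j : xpart (mkpauli fx fz) j = fx j.
Proof. by rewrite /xpart mxE split_lshift. Qed.

Lemma zpart_mkpauli fx fz j : zpart (mkpauli fx fz) j = fz j.
Proof. by rewrite /zpart mxE split_rshift. Qed.

Lemma qubit_of_lshift j : qubit_of (lshift n j) = j.
Proof. by rewrite /qubit_of split_lshift. Qed.

Lemma qubit_of_rshift j : qubit_of (rshift n j) = j.
Proof. by rewrite /qubit_of split_rshift. Qed.

Lemma xpart_GH j p i :
  xpart (apply_gate (GH j) p) i = if i == j then zpart p i else xpart p i.
Proof. exact: xpart_mkpauli. Qed.

Lemma zpart_GH j p i :
  zpart (apply_gate (GH j) p) i = if i == j then xpart p i else zpart p i.
Proof. exact: zpart_mkpauli. Qed.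

Lemma xpart_GS j p i : xpart (apply_gate (GS j) p) i = xpart p i.
Proof. exact: xpart_mkpauli. Qed.

Lemma zpart_GS j p i :
  zpart (apply_gate (GS j) p) i = if i == j then zpart p i + xpart p i else zpart p i.
Proof. exact: zpart_mkpauli. Qed.

Lemma xpart_GCNOT c t p i : xpart (apply_gate (GCNOT c t) p) i =
  if i == t then xpart p t + xpart p c else xpart p i.
Proof. exact: xpart_mkpauli. Qed.

Lemma zpart_GCNOT c t p i : zpart (apply_gate (GCNOT c t) p) i =
  if i == c then zpart p c + zpart p t else zpart p i.
Proof. exact: zpart_mkpauli. Qed.

Lemma apply_circuit_cons g gs p :
  apply_circuit (g :: gs) p = apply_circuit gs (apply_gate g p).
Proof. by []. Qed.

Lemma apply_circuit_cat gs1 gs2 p :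
  apply_circuit (gs1 ++ gs2) p = apply_circuit gs2 (apply_circuit gs1 p).
Proof. exact: foldl_cat. Qed.

Definition circuit_within A gs := all (fun g => all [in A] (gate_qubits g)) gs.

Lemma sub_circuit_within A B gs :
  {subset A <= B} -> circuit_within A gs -> circuit_within B gs.
Proof. by move=> sAB; apply: sub_all => g; apply: sub_all. Qed.

Lemma circuit_within_cat A gs1 gs2 :
  circuit_within A (gs1 ++ gs2) = circuit_within A gs1 && circuit_within A gs2.
Proof. exact: all_cat. Qed.

Lemma apply_gate_notin g p i : i \notin gate_qubits g ->
  xpart (apply_gate g p) i = xpart p i /\ zpart (apply_gate g p) i = zpart p i.
Proof.
case: g => [j|j|c t]; rewrite !inE.
- by move/negbTE=> ne_ij; rewrite xpart_GH zpart_GH ne_ij.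
- by move/negbTE=> ne_ij; rewrite xpart_GS zpart_GS ne_ij.
- by case/norP=> /negbTE ne_ic /negbTE ne_it; rewrite xpart_GCNOT zpart_GCNOT ne_ic ne_it.
Qed.

Lemma apply_circuit_notin A gs p i : circuit_within A gs -> i \notin A ->
  xpart (apply_circuit gs p) i = xpart p i /\ zpart (apply_circuit gs p) i = zpart p i.
Proof.
move=> gsA iNA; elim: gs p gsA => [|g gs IH] p //= /andP[gA gsA].
have [-> ->] := IH (apply_gate g p) gsA.
by apply: apply_gate_notin; apply: contra iNA; apply: (allP gA).
Qed.

End Gates.

Definition wf_gate {n} (g : gate n) := if g is GCNOT c t then c != t else true.

Section Symplectic.
Variable n : nat.
Implicit Types (p q : pauli n) (g : gate n) (gs : seq (gate n)).

Lemma symp_apply_gate g p q : wf_gate g ->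
  symp (apply_gate g p) (apply_gate g q) = symp p q.
Proof.
rewrite /symp; case: g => [j|j|c t] /= wf_g.
- by apply: eq_bigr => i _; rewrite !xpart_GH !zpart_GH; case: eqP => // _; apply: addrC.
- apply: eq_bigr => i _; rewrite !xpart_GS !zpart_GS; case: eqP => // _.
  by rewrite mulrDl mulrDr addrACA [_ * _ + _ * _]addrC mulrC F2_addrr addr0.
(* a CNOT adds the same cross term [a] to the summands at c and at t *)
set a := xpart p c * zpart q t + zpart p t * xpart q c.
have summand i : xpart (apply_gate (GCNOT c t) p) i * zpart (apply_gate (GCNOT c t) q) i +
    zpart (apply_gate (GCNOT c t) p) i * xpart (apply_gate (GCNOT c t) q) i =
    (xpart p i * zpart q i + zpart p i * xpart q i)
    + (if i == c then a else 0) + (if i == t then a else 0).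
  rewrite !xpart_GCNOT !zpart_GCNOT /a.
  have [eq_ic | ne_ic] := eqVneq i c; have [eq_it | ne_it] := eqVneq i t.
  - by rewrite -eq_ic -eq_it eqxx in wf_g.
  - by subst i; ring.
  - by subst i; ring.
  - by rewrite !addr0.
rewrite (eq_bigr _ (fun i _ => summand i)) !big_split /= -!big_mkcond !big_pred1_eq.
by rewrite -addrA F2_addrr addr0.
Qed.

Lemma symp_apply_circuit gs p q : all wf_gate gs ->
  symp (apply_circuit gs p) (apply_circuit gs q) = symp p q.
Proof.
elim: gs p q => [|g gs IH] p q //= /andP[wf_g wf_gs].
by rewrite IH // symp_apply_gate.
Qed.

Lemma commuting_map_circuit gs (P : seq (pauli n)) : all wf_gate gs ->
  commuting P -> commuting (map (apply_circuit gs) P).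
Proof.
move=> wf_gs comP _ _ /mapP[p Pp ->] /mapP[q Pq ->].
by rewrite symp_apply_circuit // comP.
Qed.

Lemma apply_gate_linear g : linear (apply_gate g).
Proof.
move=> a p q; apply/rowP => k.
by case: g => [j|j|c t]; rewrite /apply_gate /mkpauli /xpart /zpart !mxE;
  case: (split k) => i /=; rewrite ?mxE; try case: (_ == _); ring.
Qed.

Lemma apply_circuit_linear gs : linear (apply_circuit gs).
Proof.
elim: gs => [|g gs IH] a p q //.
by rewrite !apply_circuit_cons apply_gate_linear IH.
Qed.

Lemma restr_linear (R : {set 'I_n}) : linear (restr R).
Proof.
move=> a p q; apply/rowP => k; rewrite !mxE.
by case: ifP => _; rewrite ?mxE // mulr0 addr0.
Qed.

Lemma row_tableau (ops : seq (pauli n)) (i : 'I_(size ops)) :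
  row i (tableau ops) = nth 0 ops i.
Proof. by apply/rowP => k; rewrite !mxE. Qed.

Lemma ngen_map_linear (f : pauli n -> pauli n) (ops : seq (pauli n)) :
  linear f -> (ngen (map f ops) <= ngen ops)%N.
Proof.
move=> lin_f.
pose F : {linear pauli n -> pauli n} := HB.pack f (GRing.isLinear.Build _ _ _ _ f lin_f).
apply: leq_trans (mxrankM_maxl _ (lin1_mx F)); apply/mxrankS/row_subP => i.
have lt_i : (i < size ops)%N by case: i => /= i; rewrite size_map.
rewrite row_tableau (nth_map 0) // -[f _](mul_rV_lin1 F) -(row_tableau (Ordinal lt_i)).
by apply: submxMr; apply: row_sub.
Qed.

End Symplectic.

Section Depth.
Variable n : nat.
Implicit Types (g : gate n) (gs : seq (gate n)) (A : {pred 'I_n}) (t : 'I_n -> nat).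
Local Notation schedule := (foldl (@depth_step n)).

Lemma depth_step_mono g t t' : (forall k, t k <= t' k)%N ->
  forall k, (depth_step t g k <= depth_step t' g k)%N.
Proof.
move=> le_t k; rewrite /depth_step; case: ifP => _; last exact: le_t.
by rewrite ltnS; apply/bigmax_leqP_seq => q gq _; apply: bigmaxn_sup_seq gq _ (le_t q).
Qed.

Lemma depth_step_shift g t t' (d : nat) : (forall k, t' k = t k + d)%N ->
  forall k, depth_step t' g k = (depth_step t g k + d)%N.
Proof.
move=> def_t' k; rewrite /depth_step; case: ifP => // _; rewrite addSn; congr _.+1.
by case: g => [j|j|c c'] /=; rewrite !big_cons !big_nil !maxn0 !def_t' // addn_maxl.
Qed.

Lemma depth_step_local A g t t' : all [in A] (gate_qubits g) -> {in A, t =1 t'} ->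
  {in A, depth_step t g =1 depth_step t' g}.
Proof.
move=> /allP gA eq_t k Ak; rewrite /depth_step; case: ifP => _; last exact: eq_t.
by congr _.+1; apply: eq_big_seq => q /gA; apply: eq_t.
Qed.

Lemma schedule_mono gs t t' : (forall k, t k <= t' k)%N ->
  forall k, (schedule t gs k <= schedule t' gs k)%N.
Proof. by elim: gs t t' => [|g gs IH] t t' le_t //=; apply/IH/depth_step_mono. Qed.

Lemma schedule_shift gs t t' (d : nat) : (forall k, t' k = t k + d)%N ->
  forall k, schedule t' gs k = (schedule t gs k + d)%N.
Proof. by elim: gs t t' => [|g gs IH] t t' def_t' //=; apply/IH/depth_step_shift. Qed.

Lemma schedule_local A gs t t' : circuit_within A gs -> {in A, t =1 t'} ->
  {in A, schedule t gs =1 schedule t' gs}.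
Proof.
elim: gs t t' => [|g gs IH] t t' //= /andP[gA gsA] eq_t.
by apply: IH gsA _; apply: depth_step_local.
Qed.

Lemma schedule_notin A gs t k : circuit_within A gs -> k \notin A ->
  schedule t gs k = t k.
Proof.
move=> gsA kNA; elim: gs t gsA => [|g gs IH] t //= /andP[/allP gA gsA].
rewrite IH // /depth_step ifN //; apply: contra kNA; exact: gA.
Qed.

Lemma depth_leP gs d :
  reflect (forall k, schedule (fun=> 0%N) gs k <= d)%N (depth gs <= d)%N.
Proof.
apply: (iffP idP) => [le_d k | le_d]; last exact/bigmax_leqP.
exact: leq_trans (leq_bigmax k) le_d.
Qed.

Lemma schedule_le_depth gs k : (schedule (fun=> 0%N) gs k <= depth gs)%N.
Proof. exact: leq_bigmax. Qed.

Lemma depth_nil : depth ([::] : seq (gate n)) = 0%N.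
Proof. by apply/eqP; rewrite -leqn0; apply/depth_leP. Qed.

Lemma depth_gate g : (depth [:: g] <= 1)%N.
Proof.
apply/depth_leP => k /=; rewrite /depth_step; case: ifP => // _.
by rewrite ltnS; apply/bigmax_leqP_seq.
Qed.

Lemma depth_cat gs1 gs2 : (depth (gs1 ++ gs2) <= depth gs1 + depth gs2)%N.
Proof.
apply/depth_leP => k; rewrite foldl_cat.
apply: leq_trans (@schedule_mono gs2 _ (fun=> 0 + depth gs1)%N _ k) _.
  exact: schedule_le_depth.
by rewrite (@schedule_shift gs2 (fun=> 0%N) _ (depth gs1)) // addnC leq_add2l schedule_le_depth.
Qed.

Lemma depth_parallel A gs1 gs2 :
  circuit_within A gs1 -> circuit_within [predC A] gs2 ->
  (depth (gs1 ++ gs2) <= maxn (depth gs1) (depth gs2))%N.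
Proof.
move=> gs1A gs2A; apply/depth_leP => k; rewrite foldl_cat leq_max.
case Ak: (k \in A).
  by rewrite (schedule_notin _ gs2A) ?inE ?Ak // schedule_le_depth.
rewrite (@schedule_local _ _ _ (fun=> 0%N) gs2A) ?inE ?Ak ?schedule_le_depth ?orbT //.
by move=> k' Ck'; rewrite (schedule_notin _ gs1A) //; rewrite inE in Ck'.
Qed.

End Depth.

Section Step1.
Variables (n : nat) (u : 'cV['F_2]_(n + n)).
Implicit Types (p : pauli n) (i j : 'I_n) (Q : seq 'I_n).

Definition step1_block j : seq (gate n) :=
  if (vpart u j == 0) && (wpart u j == 1) then [:: GH j]
  else if (vpart u j == 1) && (wpart u j == 1) then [:: GS j; GH j]
  else [::].

Lemma step1_gates_cons j Q : step1_gates u (j :: Q) = step1_block j ++ step1_gates u Q.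
Proof. by []. Qed.

Lemma step1_block_within j : circuit_within (pred1 j) (step1_block j).
Proof. by rewrite /step1_block; case: ifP => _; [|case: ifP => _]; rewrite /= ?inE ?eqxx. Qed.

Lemma step1_within Q : circuit_within [in Q] (step1_gates u Q).
Proof.
elim: Q => [|j Q IH] //; rewrite step1_gates_cons circuit_within_cat.
apply/andP; split.
  by apply: sub_circuit_within (step1_block_within j) => k /eqP ->; apply: mem_head.
by apply: sub_circuit_within IH => k Qk; rewrite inE Qk orbT.
Qed.

Lemma step1_wf Q : all wf_gate (step1_gates u Q).
Proof.
elim: Q => [|j Q IH] //; rewrite step1_gates_cons all_cat IH andbT /step1_block.
by case: ifP => _ //; case: ifP.
Qed.

Lemma step1_block_xpart j p : j \in supp u ->
  xpart (apply_circuit (step1_block j) p) j = vpart u j * xpart p j + wpart u j * zpart p j.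
Proof.
rewrite /supp inE /step1_block.
case: (F2_cases (vpart u j)) => ->; case: (F2_cases (wpart u j)) => -> //= _.
- by rewrite xpart_GH eqxx mul0r mul1r add0r.
- by rewrite mul1r mul0r addr0.
- by rewrite xpart_GH zpart_GS xpart_GS !eqxx !mul1r addrC.
Qed.

Lemma step1_xpart Q p i : uniq Q -> {subset Q <= supp u} ->
  xpart (apply_circuit (step1_gates u Q) p) i =
    if i \in Q then vpart u i * xpart p i + wpart u i * zpart p i else xpart p i.
Proof.
elim: Q p => [|j Q IH] p //= /andP[jNQ uQ] sub_Qu.
rewrite step1_gates_cons apply_circuit_cat IH //; last first.
  by move=> k Qk; rewrite sub_Qu ?inE ?Qk ?orbT.
rewrite inE; have [-> | ne_ij] /= := eqVneq i j.
  by rewrite (negbTE jNQ) step1_block_xpart ?sub_Qu ?mem_head.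
by have [-> ->] := apply_circuit_notin p (step1_block_within j) ne_ij.
Qed.

Lemma depth_step1_block j : (depth (step1_block j) <= 2)%N.
Proof.
rewrite /step1_block; case: ifP => _; last case: ifP => _.
- exact: leq_trans (depth_gate _) _.
- exact: leq_trans (depth_cat [:: GS j] [:: GH j]) (leq_add (depth_gate _) (depth_gate _)).
- by rewrite depth_nil.
Qed.

Lemma depth_step1 Q : uniq Q -> (depth (step1_gates u Q) <= 2)%N.
Proof.
elim: Q => [|j Q IH] /=; first by rewrite depth_nil.
case/andP=> jNQ uQ; rewrite step1_gates_cons.
apply: leq_trans (depth_parallel (step1_block_within j) _) _.
  by apply: sub_circuit_within (step1_within Q) => k Qk; apply: contraNneq jNQ => <-.
by rewrite geq_max depth_step1_block IH.
Qed.

End Step1.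

Section Step2.
Variable n : nat.
Implicit Types (p : pauli n) (a b : 'I_n) (Q rest : seq 'I_n).

Lemma pair_seq_ind (P : seq 'I_n -> Prop) : P [::] -> (forall a, P [:: a]) ->
  (forall a b rest, P rest -> P [:: a, b & rest]) -> forall Q, P Q.
Proof.
move=> P0 P1 P2 Q; elim: {Q}(size Q).+1 {-2}Q (ltnSn (size Q)) => // N IH.
by case=> [|a [|b rest]] //= lt_rest; apply/P2/IH; lia.
Qed.

Lemma pair_round_cons a b rest : pair_round [:: a, b & rest] =
  (GCNOT b a :: (pair_round rest).1, a :: (pair_round rest).2).
Proof. by rewrite /=; case: (pair_round rest). Qed.

Lemma size_pair_round Q : ((size (pair_round Q).2).*2 <= (size Q).+1)%N.
Proof. by elim/pair_seq_ind: Q => // a b rest IH; rewrite pair_round_cons /=; lia. Qed.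

Lemma subseq_pair_round Q : subseq (pair_round Q).2 Q.
Proof.
elim/pair_seq_ind: Q => // a b rest IH; rewrite pair_round_cons /= eqxx.
exact: subseq_trans IH (subseq_cons rest b).
Qed.

Lemma head_pair_round d Q : head d (pair_round Q).2 = head d Q.
Proof. by case: Q => [|a [|b rest]] //; rewrite pair_round_cons. Qed.

Lemma pair_round_within Q : circuit_within [in Q] (pair_round Q).1.
Proof.
elim/pair_seq_ind: Q => // a b rest IH; rewrite pair_round_cons /= !inE !eqxx orbT /=.
by apply: sub_circuit_within IH => k rest_k; rewrite !inE rest_k !orbT.
Qed.

Lemma pair_round_wf Q : uniq Q -> all wf_gate (pair_round Q).1.
Proof.
elim/pair_seq_ind: Q => // a b rest IH; rewrite pair_round_cons /= inE negb_or.
by case/andP=> /andP[ne_ab _] /andP[_ /IH ->]; rewrite eq_sym ne_ab.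
Qed.

Lemma pair_round_xsum Q p : uniq Q ->
  \sum_(k <- (pair_round Q).2) xpart (apply_circuit (pair_round Q).1 p) k =
  \sum_(k <- Q) xpart p k.
Proof.
elim/pair_seq_ind: Q p => // a b rest IH p; rewrite pair_round_cons /= !inE !negb_or.
case/andP=> /andP[ne_ab aNrest] /andP[bNrest u_rest].
rewrite !big_cons IH //.
have [-> _] := apply_circuit_notin (apply_gate (GCNOT b a) p) (pair_round_within rest) aNrest.
rewrite xpart_GCNOT eqxx -addrA; congr (_ + (_ + _)); apply: eq_big_seq => k rest_k.
by rewrite xpart_GCNOT; case: eqP => // eq_ka; rewrite -eq_ka rest_k in aNrest.
Qed.

Lemma depth_pair_round Q : uniq Q -> (depth (pair_round Q).1 <= 1)%N.
Proof.
elim/pair_seq_ind: Q => [|a|a b rest IH]; rewrite ?depth_nil //.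
rewrite pair_round_cons /= !inE !negb_or => /andP[/andP[_ aNrest] /andP[bNrest /IH le1]].
have gate_ab : circuit_within [in [:: a; b]] [:: GCNOT b a] by rewrite /= !inE !eqxx orbT.
apply: leq_trans (depth_parallel gate_ab _) _; last by rewrite geq_max depth_gate.
apply: sub_circuit_within (pair_round_within rest) => k rest_k; rewrite !inE negb_or.
by apply/andP; split; [apply: contraNneq aNrest | apply: contraNneq bNrest] => <-.
Qed.

Lemma tree_gates_fuel_small f Q : (size Q <= 1)%N -> tree_gates_fuel f Q = [::].
Proof. by case: f => //= f ->. Qed.

Lemma tree_gates_fuel_round f Q : (1 < size Q)%N ->
  tree_gates_fuel f.+1 Q = (pair_round Q).1 ++ tree_gates_fuel f (pair_round Q).2.
Proof. by move=> lt1Q; rewrite /= leqNgt lt1Q; case: (pair_round Q). Qed.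

Lemma tree_gates_within f Q : circuit_within [in Q] (tree_gates_fuel f Q).
Proof.
elim: f Q => [|f IH] Q //; have [le1Q | lt1Q] := leqP (size Q) 1.
  by rewrite tree_gates_fuel_small.
rewrite tree_gates_fuel_round // circuit_within_cat pair_round_within /=.
by apply: sub_circuit_within (IH _); apply: mem_subseq (subseq_pair_round Q).
Qed.

Lemma tree_gates_wf f Q : uniq Q -> all wf_gate (tree_gates_fuel f Q).
Proof.
elim: f Q => [|f IH] Q uQ //; have [le1Q | lt1Q] := leqP (size Q) 1.
  by rewrite tree_gates_fuel_small.
rewrite tree_gates_fuel_round // all_cat pair_round_wf //=.
exact/IH/(subseq_uniq (subseq_pair_round Q)).
Qed.

Lemma tree_gates_xpart_head f Q p d : uniq Q -> Q != [::] -> (size Q <= f.+1)%N ->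
  xpart (apply_circuit (tree_gates_fuel f Q) p) (head d Q) = \sum_(k <- Q) xpart p k.
Proof.
elim: f Q p => [|f IH] Q p uQ nQ leQf; have [le1Q | lt1Q] := leqP (size Q) 1.
- by rewrite tree_gates_fuel_small //; case: Q {uQ leQf} nQ le1Q => [|a []] //; rewrite big_seq1.
- by exfalso; lia.
- by rewrite tree_gates_fuel_small //; case: Q {uQ leQf IH} nQ le1Q => [|a []] //; rewrite big_seq1.
rewrite tree_gates_fuel_round // apply_circuit_cat -(head_pair_round d Q) IH.
- exact: pair_round_xsum.
- exact: subseq_uniq (subseq_pair_round Q) uQ.
- by case: Q {uQ nQ leQf} lt1Q => [|a [|b rest]] //; rewrite pair_round_cons.
- by have := size_pair_round Q; lia.
Qed.

Lemma depth_tree_gates f Q m : uniq Q -> (size Q <= 2 ^ m)%N ->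
  (depth (tree_gates_fuel f Q) <= m)%N.
Proof.
elim: f Q m => [|f IH] Q m uQ leQm; first by rewrite depth_nil.
have [le1Q | lt1Q] := leqP (size Q) 1; first by rewrite tree_gates_fuel_small // depth_nil.
case: m leQm => [|m] leQm; first by move: leQm; rewrite expn0; lia.
rewrite tree_gates_fuel_round //; apply: leq_trans (depth_cat _ _) _.
rewrite -add1n leq_add ?depth_pair_round // IH //.
  exact: subseq_uniq (subseq_pair_round Q) uQ.
by have := size_pair_round Q; move: leQm; rewrite expnS; lia.
Qed.

End Step2.

Section Stage.
Variable n : nat.
Implicit Types (p : pauli n) (j : 'I_n) (u : 'cV['F_2]_(n + n)) (R : {set 'I_n}).
Implicit Types (ch : choice n).

Lemma mul_pauli_cV p u : (p *m u) 0 0 =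
  \sum_(j < n) (xpart p j * vpart u j + zpart p j * wpart u j).
Proof. by rewrite mxE big_split_ord /= -big_split. Qed.

Lemma supp_coord u k : u k 0 != 0 -> qubit_of k \in supp u.
Proof.
case: (split_ordP k) => j -> nz_k; rewrite ?qubit_of_lshift ?qubit_of_rshift.
  by rewrite inE /vpart nz_k.
by rewrite inE /wpart nz_k orbT.
Qed.

Lemma notin_supp u j : j \notin supp u -> vpart u j = 0 /\ wpart u j = 0.
Proof. by rewrite inE negb_or !negbK => /andP[/eqP -> /eqP ->]. Qed.

Lemma restr_mul R p u : supp u \subset R -> restr R p *m u = p *m u.
Proof.
move=> uR; apply/matrixP => i0 j0; rewrite [i0]ord1 [j0]ord1 !mxE; apply: eq_bigr => k _.
rewrite mxE; case: ifP => // /negbT kNR.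
have [-> | nz_k] := eqVneq (u k 0) 0; first by rewrite !mulr0.
by rewrite (subsetP uR _ (supp_coord nz_k)) in kNR.
Qed.

Lemma stage_wf ch : uniq (ch_Q ch) -> all wf_gate (stage_gates ch).
Proof. by move=> uQ; rewrite all_cat step1_wf tree_gates_wf. Qed.

Lemma stage_within ch : circuit_within [in ch_Q ch] (stage_gates ch).
Proof. by rewrite circuit_within_cat step1_within tree_gates_within. Qed.

Lemma stage_xpart_head ch p h Q : ch_Q ch = h :: Q -> uniq (ch_Q ch) ->
  ch_Q ch =i supp (ch_u ch) ->
  xpart (apply_circuit (stage_gates ch) p) h = (p *m ch_u ch) 0 0.
Proof.
move=> def_Q uQ eq_Q; set u := ch_u ch.
have -> : h = head h (ch_Q ch) by rewrite def_Q.
rewrite apply_circuit_cat tree_gates_xpart_head //; last by rewrite def_Q.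
rewrite (eq_big_seq (fun k => vpart u k * xpart p k + wpart u k * zpart p k)); last first.
  by move=> k Qk; rewrite step1_xpart ?Qk // => k'; rewrite eq_Q.
rewrite big_uniq // big_mkcond mul_pauli_cV; apply: eq_bigr => j _.
case: ifP => [_ | /negbT]; first by rewrite mulrC [zpart _ _ * _]mulrC.
by rewrite eq_Q => /notin_supp [-> ->]; rewrite !mulr0 addr0.
Qed.

End Stage.

Section ValidStage.
Variable n : nat.
Implicit Types (p : pauli n) (j : 'I_n) (ops : seq (pauli n)) (ch : choice n).

Lemma mem_remaining ops j : (j \in remaining ops) = has (fun p => xpart p j != 0) ops.
Proof. by rewrite inE -has_predC. Qed.

Lemma restr_sub_tableau ops p : p \in ops -> (restr (remaining ops) p <= restr_tableau ops)%MS.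
Proof.
move=> ops_p; have lt_p : (index p ops < size (map (restr (remaining ops)) ops))%N.
  by rewrite size_map index_mem.
have -> : restr (remaining ops) p = nth 0 (map (restr (remaining ops)) ops) (index p ops).
  by rewrite (nth_map 0) ?index_mem // nth_index.
by rewrite -(row_tableau (Ordinal lt_p)) row_sub.
Qed.

Lemma valid_stage_orth ops ch p : valid_stage ops ch -> p \in ops -> (p *m ch_u ch) 0 0 = 0.
Proof.
case=> [[_ _ /andP[_ sub_M] _ /eqP Mu0] [uR _ _ _]] /restr_sub_tableau sub_p.
rewrite -(restr_mul _ uR); have /submxP[X ->] := submx_trans sub_p sub_M.
by rewrite -mulmxA Mu0 mulmx0 mxE.
Qed.

Lemma card_remaining_apply_stage ops ch : valid_stage ops ch ->
  (#|remaining (apply_stage ops ch)| < #|remaining ops|)%N.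
Proof.
move=> valid; case: (valid) => [[_ _ _ nz_u _] [uR _ uQ eq_Q]].
case def_Q: (ch_Q ch) => [|h Q].
  by case/cV0Pn: nz_u => k /supp_coord; rewrite -eq_Q def_Q.
have Qrem j : j \in ch_Q ch -> j \in remaining ops by rewrite eq_Q; apply: (subsetP uR).
rewrite (cardsD1 h (remaining ops)) Qrem ?def_Q ?mem_head // add1n ltnS; apply: subset_leq_card.
apply/subsetP => j; rewrite in_setD1 !mem_remaining => /hasP[_ /mapP[p ops_p ->] nz_pj].
have [eq_jh | _] /= := eqVneq j h.
  by rewrite eq_jh (stage_xpart_head _ def_Q) ?(valid_stage_orth valid) ?eqxx in nz_pj.
rewrite -mem_remaining; have [/Qrem // | jNQ] := boolP (j \in ch_Q ch).
have [eq_x _] := apply_circuit_notin p (stage_within ch) jNQ.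
by rewrite mem_remaining; apply/hasP; exists p; rewrite // -eq_x.
Qed.

End ValidStage.

Section NullVector.
Variable n : nat.
Implicit Types (p q : pauli n) (j : 'I_n) (S R : {set 'I_n}) (ops : seq (pauli n)).

Definition coord_space S : 'M['F_2]_(n + n) :=
  (\sum_(k | qubit_of k \in S) <<delta_mx 0 k : 'rV['F_2]_(n + n)>>)%MS.

Lemma card_coords S : #|[pred k : 'I_(n + n) | qubit_of k \in S]| = (#|S| + #|S|)%N.
Proof.
rewrite -[LHS]sum1_card big_split_ord /= -!sum1_card.
by congr (_ + _)%N; apply: eq_bigl => j; rewrite inE ?qubit_of_lshift ?qubit_of_rshift.
Qed.

Lemma rank_coord_space S : \rank (coord_space S) = (#|S| + #|S|)%N.
Proof.
have /mxdirectP -> /= := @mxdirect_delta 'F_2 _ [pred k | qubit_of k \in S] (n + n) id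
  (fun _ _ _ _ => id).
by rewrite -card_coords -sum1_card; apply: eq_bigr => k _; rewrite mxrank_gen mxrank_delta.
Qed.

Lemma coord_space_coord S (y : 'rV['F_2]_(n + n)) k :
  (y <= coord_space S)%MS -> qubit_of k \notin S -> y 0 k = 0.
Proof.
move=> yS kNS; have : (coord_space S <= kermx (delta_mx k 0 : 'cV['F_2]_(n + n)))%MS.
  apply/sumsmx_subP => i Si; rewrite genmxE; apply/sub_kermxP; rewrite mul_delta_mx_0 //.
  by apply: contraNneq kNS => <-.
by move=> /(submx_trans yS) /sub_kermxP; rewrite -colE => /matrixP /(_ 0 0); rewrite !mxE.
Qed.

Lemma exists_null_vector_on r (A : 'M['F_2]_(r, n + n)) S : (\rank A < #|S| + #|S|)%N ->
  exists2 u : 'cV['F_2]_(n + n), u != 0 & A *m u = 0 /\ supp u \subset S.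
Proof.
move=> ltAS; have rank_ker := mxrank_mul_ker (coord_space S) A^T.
have leA : (\rank (coord_space S *m A^T) <= \rank A)%N.
  by rewrite -[X in (_ <= X)%N]mxrank_tr mxrankM_maxr.
have /matrix0Pn [i [k nz_ik]] : (coord_space S :&: kermx A^T)%MS != 0.
  rewrite -mxrank_eq0; apply/eqP => rank0; move: rank_ker leA.
  by rewrite rank0 addn0 rank_coord_space => ->; rewrite leqNgt ltAS.
pose y := row i (coord_space S :&: kermx A^T)%MS.
have sub_y : (y <= coord_space S :&: kermx A^T)%MS := row_sub i _.
have yS : (y <= coord_space S)%MS := submx_trans sub_y (capmxSl _ _).
have yA : y *m A^T = 0 by apply/sub_kermxP; apply: submx_trans sub_y (capmxSr _ _).
have nz_y : y 0 k != 0 by rewrite mxE.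
clearbody y; exists y^T; first by apply/cV0Pn; exists k; rewrite mxE.
split; first by rewrite -(trmxK A) -trmx_mul yA trmx0.
apply/subsetP => j; apply: contraLR => jNS.
rewrite inE negb_or !negbK /vpart /wpart !mxE.
by rewrite !(coord_space_coord yS) ?qubit_of_lshift ?qubit_of_rshift.
Qed.

Definition symp_dual q : 'cV['F_2]_(n + n) :=
  \col_k (match split k with inl j => zpart q j | inr j => xpart q j end).

Lemma mul_symp_dual p q : (p *m symp_dual q) 0 0 = symp p q.
Proof.
rewrite mxE big_split_ord /symp big_split /=.
by congr (_ + _); apply: eq_bigr => j _; rewrite !mxE ?split_lshift ?split_rshift.
Qed.

Lemma xpart_restr R p j : xpart (restr R p) j = if j \in R then xpart p j else 0.
Proof. by rewrite /xpart mxE qubit_of_lshift. Qed.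

Lemma zpart_restr R p j : zpart (restr R p) j = if j \in R then zpart p j else 0.
Proof. by rewrite /zpart mxE qubit_of_rshift. Qed.

Lemma supp_symp_dual_restr R p : supp (symp_dual (restr R p)) \subset R.
Proof.
apply/subsetP => j; rewrite inE /vpart /wpart !mxE split_lshift split_rshift.
by rewrite xpart_restr zpart_restr; case: ifP; rewrite ?eqxx.
Qed.

Lemma symp_restr_remaining ops p q : p \in ops -> q \in ops ->
  symp (restr (remaining ops) p) (restr (remaining ops) q) = symp p q.
Proof.
move=> ops_p ops_q; apply: eq_bigr => j _; rewrite !xpart_restr !zpart_restr.
case: ifP => // /negbT; rewrite mem_remaining => /hasPn diag_j.
by rewrite (eqP (negbNE (diag_j p ops_p))) (eqP (negbNE (diag_j q ops_q))) !mul0r !mulr0 addr0.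
Qed.

Lemma restr_tableau_mul_symp_dual ops p : commuting ops -> p \in ops ->
  restr_tableau ops *m symp_dual (restr (remaining ops) p) = 0.
Proof.
move=> comm ops_p; apply/colP => i; rewrite [RHS]mxE.
have lt_i : (i < size ops)%N by case: i => /= i; rewrite size_map.
have -> : forall B : 'cV_(n + n),
    (restr_tableau ops *m B) i 0 = (row i (restr_tableau ops) *m B) 0 0.
  by move=> B; rewrite -row_mul [RHS]mxE.
rewrite row_tableau mul_symp_dual (nth_map 0) // symp_restr_remaining ?mem_nth //.
exact/comm/ops_p/mem_nth.
Qed.

Lemma exists_sparse_null_vector ops : commuting ops -> remaining ops != set0 ->
  exists2 u : 'cV['F_2]_(n + n), u != 0 &
    [/\ restr_tableau ops *m u = 0, supp u \subset remaining ops
      & (sweight u <= \rank (restr_tableau ops) + 1)%N].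
Proof.
move=> comm /set0Pn[j0 rem_j0]; set R := remaining ops; set r := \rank _.
have [small_R | large_R] := leqP #|R| r.+1.
  have := rem_j0; rewrite mem_remaining => /hasP[p0 ops_p0 nz_p0].
  exists (symp_dual (restr R p0)).
    by apply/cV0Pn; exists (rshift n j0); rewrite mxE split_rshift xpart_restr rem_j0.
  split; [exact: restr_tableau_mul_symp_dual | exact: supp_symp_dual_restr |].
  by rewrite addn1; apply: leq_trans (subset_leq_card (supp_symp_dual_restr _ _)) small_R.
pose S := [set j in take r.+1 (enum R)].
have card_S : #|S| = r.+1.
  by rewrite cardsE (card_uniqP _) ?take_uniq ?enum_uniq // size_takel // -cardE ltnW.
have SR : S \subset R by apply/subsetP => j; rewrite inE => /mem_take; rewrite mem_enum.
have [|u nz_u [Au uS]] := @exists_null_vector_on _ (restr_tableau ops) S.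
  by rewrite card_S addSn ltnS; apply: leq_addr.
exists u => //; split; [by [] | exact: subset_trans uS SR |].
by rewrite /sweight addn1 -card_S subset_leq_card.
Qed.

Lemma exists_valid_stage ops : commuting ops -> remaining ops != set0 ->
  exists ch : choice n, valid_stage ops ch.
Proof.
move=> comm rem0; have [u nz_u [Au uR wt_u]] := exists_sparse_null_vector comm rem0.
exists (MkChoice (row_base (restr_tableau ops)) u (enum (supp u))); split; split => //=.
- exact: row_base_free.
- exact/eqmxP/eq_row_base.
- have /submxP[X ->] : (row_base (restr_tableau ops) <= restr_tableau ops)%MS.
    by rewrite eq_row_base.
  by rewrite -mulmxA Au mulmx0.
- exact: enum_uniq.
- exact: mem_enum.
Qed.

End NullVector.

Section Run.
Variable n : nat.
Implicit Types (ops : seq (pauli n)) (ch : choice n) (chs : seq (choice n)).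

Lemma size_valid_run ops chs : valid_run ops chs -> (size chs <= #|remaining ops|)%N.
Proof.
elim: chs ops => [|ch chs IH] ops //= [valid run].
exact: leq_ltn_trans (IH _ run) (card_remaining_apply_stage valid).
Qed.

Lemma valid_run_stage ops chs ch0 i : valid_run ops chs -> (i < size chs)%N ->
  exists ops', valid_stage ops' (nth ch0 chs i).
Proof.
elim: chs ops i => [|ch chs IH] ops [|i] //= [valid run] lt_i; first by exists ops.
exact: IH run lt_i.
Qed.

Lemma final_opsE ops chs : final_ops ops chs = map (apply_circuit (output_circuit chs)) ops.
Proof.
elim: chs ops => [|ch chs IH] ops /=; first by rewrite map_id.
rewrite [LHS]IH /apply_stage -map_comp; apply: eq_map => p.
by rewrite /output_circuit /= apply_circuit_cat.
Qed.

Lemma commuting_final_ops ops chs : valid_run ops chs -> commuting ops ->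
  commuting (final_ops ops chs).
Proof.
elim: chs ops => [|ch chs IH] ops //= [[_ [_ _ uQ _]] run] comm.
exact/IH/commuting_map_circuit/comm/stage_wf.
Qed.

Lemma depth_stage ops ch : valid_stage ops ch ->
  (depth (stage_gates ch) <= 3 * (trunc_log 2 (ch_r ch)).+1)%N.
Proof.
case=> _ [_ wt_u uQ eq_Q]; apply: leq_trans (depth_cat _ _) _.
have size_Q : (size (ch_Q ch) <= 2 ^ (trunc_log 2 (ch_r ch)).+1)%N.
  rewrite -(card_uniqP uQ) (eq_card eq_Q); apply: leq_trans wt_u _.
  by rewrite addn1; apply: trunc_log_ltn.
have := depth_step1 (ch_u ch) uQ; have := depth_tree_gates (size (ch_Q ch)) uQ size_Q.
rewrite /step2_gates; lia.
Qed.

Lemma valid_stage_rank ops ch : valid_stage ops ch -> (ch_r ch <= ngen ops)%N.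
Proof.
case=> [[_ /eqP free_M eq_M _ _] _]; rewrite -free_M (eqmx_rank eq_M).
exact/ngen_map_linear/restr_linear.
Qed.

Lemma depth_output_circuit ops chs : valid_run ops chs ->
  (depth (output_circuit chs) <= size chs * (3 * (trunc_log 2 (ngen ops)).+1))%N.
Proof.
elim: chs ops => [|ch chs IH] ops /=; first by rewrite depth_nil.
case=> valid run; apply: leq_trans (depth_cat _ _) _; rewrite mulSn leq_add //.
  apply: leq_trans (depth_stage valid) _; rewrite leq_mul2l ltnS leq_trunc_log //.
  exact: valid_stage_rank valid.
apply: leq_trans (IH _ run) _; rewrite leq_mul2l leq_mul2l ltnS leq_trunc_log ?orbT //.
exact/ngen_map_linear/apply_circuit_linear.
Qed.

Lemma remaining_neq0 ops : ~~ all_diag ops -> remaining ops != set0.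
Proof.
case/allPn => p ops_p /forallPn[j nz_pj]; apply/set0Pn; exists j.
by rewrite mem_remaining; apply/hasP; exists p.
Qed.

End Run.

Theorem mainTheorem6 :
  exists C : nat,
  forall (n : nat) (P : seq (pauli n)),
    commuting P ->
    forall chs : seq (choice n), valid_run P chs ->
      [/\ (size chs <= n)%N,
          (* the algorithm never gets stuck: a valid next stage exists *)
          ~~ all_diag (final_ops P chs) ->
            exists ch : choice n, valid_stage (final_ops P chs) ch
        & all_diag (final_ops P chs) ->
          [/\ all_diag (map (apply_circuit (output_circuit chs)) P),
              (forall i, (i < size chs)%N ->
                 let ch := nth (@MkChoice n 0%N 0 0 [::]) chs i in
                 (depth (stage_gates ch) <= C * (trunc_log 2 (ch_r ch)).+1)%N)
            & (depth (output_circuit chs) <= C * n * (trunc_log 2 (ngen P)).+1)%N]].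
Proof.
exists 3 => n P comm chs run.
have size_chs : (size chs <= n)%N.
  by apply: leq_trans (size_valid_run run) (leq_trans (max_card _) (eq_leq (card_ord n))).
split=> // [not_diag | diag].
  exact: exists_valid_stage (commuting_final_ops run comm) (remaining_neq0 not_diag).
split; first by rewrite -final_opsE.
  by move=> i /(valid_run_stage (@MkChoice n 0 0 0 [::]) run) [ops' /depth_stage].
apply: leq_trans (depth_output_circuit run) _.
by rewrite -mulnA mulnCA leq_mul2l leq_mul2r size_chs !orbT.
Qed.
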